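(* If $\mathcal{P}$ and $\mathcal{Q}$ are ranked finite posets each having a minimum and a maximum element, then $\mathcal{J}(\mathcal{P}\times\mathcal{Q},t)=\mathcal{J}(\mathcal{P},t)\,\mathcal{J}(\mathcal{Q},t)$.
   Context: $\mathcal{P}\times\mathcal{Q}$ carries the product order $(x_1,x_2)\le(y_1,y_2)$ iff $x_1\le y_1$ and $x_2\le y_2$, with rank $\mathrm{rk}(x_1,x_2)=\mathrm{rk}(x_1)+\mathrm{rk}(x_2)$. For a ranked finite poset $\mathcal{R}$ with minimum $\hat 0$ and maximum $\hat 1$, $\mathrm{rk}(\mathcal{R})=\mathrm{rk}(\hat 1)$; let $\delta_3(x,y,z)=1$ if $x=y=z$ and $0$ otherwise, let $J=J_\mathcal{R}$ be the unique integer-valued function on triples $x\le y\le z$ with $\sum_{x\le a\le y\le b\le z}J(a,y,b)=\delta_3(x,y,z)$ for all $x\le y\le z$, and $\mathcal{J}(\mathcal{R},t)=(-1)^{\mathrm{rk}(\mathcal{R})}\sum_{x\in\mathcal{R}}J(\hat 0,x,\hat 1)\,t^{\mathrm{rk}(\mathcal{R})-\mathrm{rk}(x)}$. *)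

From mathcomp Require Import all_boot all_order all_algebra.
Set Implicit Arguments. Unset Strict Implicit. Unset Printing Implicit Defensive.
Import Order.Theory GRing.Theory.

(* Finite posets with a minimum (\bot) and maximum (\top) are modelled by
   MathComp's finTBPOrderType; the product poset with the product order is
   MathComp's T1 *p T2 (order: componentwise). *)

Section Defs.
Variables (disp : Order.disp_t) (T : finTBPOrderType disp).

Definition covers (x y : T) : bool :=
  ((x < y)%O && [forall z : T, ~~ ((x < z)%O && (z < y)%O)]).

Definition rank_function (rk : T -> nat) : Prop :=
  rk \bot%O = 0%N /\ forall x y : T, covers x y -> rk y = (rk x).+1.

Definition delta3 (x y z : T) : int := ((x == y) && (y == z))%:R.

Definition is_J (J : T -> T -> T -> int) : Prop :=
  forall x y z : T, (x <= y)%O -> (y <= z)%O ->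
    (\sum_(a : T | (x <= a)%O && (a <= y)%O)
       \sum_(b : T | (y <= b)%O && (b <= z)%O) J a y b)%R = delta3 x y z.

Definition calJ (rk : T -> nat) (J : T -> T -> T -> int) : {poly int} :=
  ((-1) ^+ (rk \top%O) *
   \sum_(x : T) J \bot%O x \top%O *: 'X^(rk \top%O - rk x))%R.

End Defs.

Definition prod_rank (d1 d2 : Order.disp_t) (P : finTBPOrderType d1)
  (Q : finTBPOrderType d2) (rkP : P -> nat) (rkQ : Q -> nat) : P *p Q -> nat :=
  fun x => (rkP x.1 + rkQ x.2)%N.

From mathcomp Require Import all_boot all_order all_algebra.
Import Order.Theory GRing.Theory.
Set Implicit Arguments. Unset Strict Implicit. Unset Printing Implicit Defensive.

(* The defining system of [J] is triangular: peeling off the term [J(x,y,z)]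
   leaves terms on strictly smaller intervals, so [J] is unique on triples
   [x <= y <= z].  On a product poset every interval, and [delta3], factors,
   hence [(a, b) |-> J_P(a.1,y.1,b.1) J_Q(a.2,y.2,b.2)] solves the system of
   [P * Q] and is therefore [J_{P*Q}].  The sum defining [calJ] then splits
   into the product of the two sums, the exponents adding up because ranks
   are monotone (so the truncated subtractions are exact). *)

Local Open Scope order_scope.

Section FinitePOrder.
Variables (d : Order.disp_t) (T : finPOrderType d).

Lemma card_upset_lt (a a' : T) :
  a < a' -> (#|[pred w | (a' <= w)%O]| < #|[pred w | (a <= w)%O]|)%N.
Proof.
move=> lt_aa'; apply: proper_card; apply/properP; split.
  by apply/subsetP => w; rewrite !inE; apply: le_trans (ltW lt_aa').
by exists a; rewrite !inE ?lexx // lt_geF.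
Qed.

Lemma card_downset_le (b' b : T) :
  b' <= b -> (#|[pred w | (w <= b')%O]| <= #|[pred w | (w <= b)%O]|)%N.
Proof.
by move=> le_b'b; apply/subset_leq_card/subsetP => w; rewrite !inE => /le_trans; apply.
Qed.

Lemma card_downset_lt (b' b : T) :
  b' < b -> (#|[pred w | (w <= b')%O]| < #|[pred w | (w <= b)%O]|)%N.
Proof.
move=> lt_b'b; apply: proper_card; apply/properP; split.
  by apply/subsetP => w; rewrite !inE => /le_trans; apply; apply: ltW.
by exists b; rewrite !inE ?lexx // lt_geF.
Qed.

Lemma double_interval_sum_eq0 (R : nmodType) (y : T) (D : T -> T -> R) :
  (forall a b, a <= y -> y <= b ->
     (\sum_(a' | (a <= a' <= y)%O) \sum_(b' | (y <= b' <= b)%O) D a' b')%R = 0%R) ->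
  forall a b, a <= y -> y <= b -> D a b = 0%R.
Proof.
move=> sumD0 a b.
have [n] := ubnP (#|[pred w | (a <= w)%O]| + #|[pred w | (w <= b)%O]|)%N.
elim: n a b => // n IH a b; rewrite ltnS => size_ab le_ay le_yb.
have := sumD0 a b le_ay le_yb.
rewrite (bigD1 a) ?lexx ?le_ay //= (bigD1 b) ?lexx ?le_yb //=.
have -> : (\sum_(b' | (y <= b' <= b)%O && (b' != b)) D a b')%R = 0%R.
  apply: big1 => b' /andP[/andP[le_yb' le_b'b] ne_b'b].
  apply: IH => //; apply: leq_trans size_ab; rewrite ltn_add2l.
  by apply: card_downset_lt; rewrite lt_neqAle ne_b'b.
have -> : (\sum_(a' | (a <= a' <= y)%O && (a' != a))
             \sum_(b' | (y <= b' <= b)%O) D a' b')%R = 0%R.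
  apply: big1 => a' /andP[/andP[le_aa' le_a'y] ne_a'a].
  apply: big1 => b' /andP[le_yb' le_b'b].
  apply: IH => //; apply: leq_trans size_ab; rewrite -addSn.
  by apply: leq_add (card_downset_le le_b'b); apply: card_upset_lt;
     rewrite lt_neqAle eq_sym ne_a'a.
by rewrite !addr0.
Qed.

End FinitePOrder.

Section BoundedFinitePOrder.
Variables (d : Order.disp_t) (T : finTBPOrderType d).

Lemma exists_covers_le (x y : T) : x < y -> exists2 z, covers x z & z <= y.
Proof.
move=> lt_xy; pose S z := x < z <= y.
have Sy : S y by rewrite /S lt_xy lexx.
case: (arg_minnP (fun z => #|[pred w | (w <= z)%O]|) Sy) => z /andP[lt_xz le_zy] minz.
exists z => //; apply/andP; split=> //; apply/forallP => w; apply/negP.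
case/andP=> lt_xw lt_wz.
have := minz w; rewrite /S lt_xw (le_trans (ltW lt_wz) le_zy) => /(_ isT).
by rewrite leqNgt card_downset_lt.
Qed.

Lemma rank_function_homo (rk : T -> nat) :
  rank_function rk -> {homo rk : x y / x <= y >-> (x <= y)%N}.
Proof.
case=> _ rk_covers x y.
have [n] := ubnP #|[pred w | (x <= w)%O]|.
elim: n x => // n IH x; rewrite ltnS => size_x.
rewrite le_eqVlt => /predU1P[-> // | lt_xy].
have [z cov_xz le_zy] := exists_covers_le lt_xy.
apply: ltnW; rewrite -(rk_covers _ _ cov_xz); apply: IH le_zy; apply: leq_trans size_x.
by apply: card_upset_lt; case/andP: cov_xz.
Qed.

Lemma is_J_unique (J1 J2 : T -> T -> T -> int) :
  is_J J1 -> is_J J2 -> forall a y b, a <= y -> y <= b -> J1 a y b = J2 a y b.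
Proof.
move=> J1_J J2_J a y b le_ay le_yb; apply/eqP; rewrite -subr_eq0; apply/eqP.
apply: (@double_interval_sum_eq0 _ _ _ y (fun a' b' => J1 a' y b' - J2 a' y b')%R) => //.
move=> {}a {}b {}le_ay {}le_yb.
under eq_bigr do rewrite sumrB.
by rewrite sumrB J1_J // J2_J // subrr.
Qed.

End BoundedFinitePOrder.

Lemma sum_pair_mul (R : pzSemiRingType) (I J : finType)
    (A1 B1 : pred I) (A2 B2 : pred J) (f : I -> I -> R) (g : J -> J -> R) :
  (\sum_(a : I * J | A1 a.1 && A2 a.2) \sum_(b : I * J | B1 b.1 && B2 b.2)
     f a.1 b.1 * g a.2 b.2 =
   (\sum_(a1 | A1 a1) \sum_(b1 | B1 b1) f a1 b1) *
   (\sum_(a2 | A2 a2) \sum_(b2 | B2 b2) g a2 b2))%R.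
Proof.
rewrite big_distrlr [RHS]pair_big; apply: eq_bigr => a _.
by rewrite big_distrlr [RHS]pair_big.
Qed.

Section Product.
Variables (d1 d2 : Order.disp_t) (P : finTBPOrderType d1) (Q : finTBPOrderType d2).

Lemma delta3_prod (x y z : P *p Q) :
  delta3 x y z = (delta3 x.1 y.1 z.1 * delta3 x.2 y.2 z.2)%R.
Proof.
case: x y z => [x1 x2] [y1 y2] [z1 z2]; rewrite /delta3 !xpair_eqE.
by case: (x1 == y1); case: (x2 == y2); case: (y1 == z1); case: (y2 == z2).
Qed.

Lemma is_J_prod (JP : P -> P -> P -> int) (JQ : Q -> Q -> Q -> int) :
  is_J JP -> is_J JQ ->
  is_J (fun a y b : P *p Q => (JP a.1 y.1 b.1 * JQ a.2 y.2 b.2)%R).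
Proof.
move=> JP_J JQ_J x y z; rewrite !leEprod => /andP[le_xy1 le_xy2] /andP[le_yz1 le_yz2].
rewrite delta3_prod -JP_J // -JQ_J // -sum_pair_mul.
apply: eq_big => [a|a _]; first by rewrite !leEprod andbACA.
by apply: eq_bigl => b; rewrite !leEprod andbACA.
Qed.

End Product.

Local Open Scope ring_scope.

Theorem proposition6p5 (d1 d2 : Order.disp_t)
  (P : finTBPOrderType d1) (Q : finTBPOrderType d2)
  (rkP : P -> nat) (rkQ : Q -> nat)
  (JP : P -> P -> P -> int) (JQ : Q -> Q -> Q -> int)
  (JPQ : P *p Q -> P *p Q -> P *p Q -> int) :
  rank_function rkP -> rank_function rkQ ->
  is_J JP -> is_J JQ -> is_J JPQ ->
  calJ (prod_rank rkP rkQ) JPQ = (calJ rkP JP * calJ rkQ JQ)%R.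
Proof.
move=> rkP_rank rkQ_rank JP_J JQ_J JPQ_J.
have JPQE (x : P *p Q) : JPQ \bot%O x \top%O = JP \bot%O x.1 \top%O * JQ \bot%O x.2 \top%O.
  by rewrite (is_J_unique JPQ_J (is_J_prod JP_J JQ_J)) ?le0x ?lex1.
rewrite /calJ /prod_rank /= exprD mulrACA big_distrlr pair_bigA /=; congr (_ * _).
apply: eq_bigr => -[x1 x2] _; rewrite JPQE -scalerAl -scalerAr scalerA -exprD.
have := rank_function_homo rkP_rank (lex1 x1).
have := rank_function_homo rkQ_rank (lex1 x2).
by move=> le_x2 le_x1; congr (_ *: 'X^_); rewrite /= subnDA addnBA // -addnBAC.
Qed.
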